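(* Let $\phi : A \to B$ be a positive linear map between monotone complete ordered vector spaces $A$ and $B$. Assume that $A$ is a vector lattice admitting some faithful positive linear functional. If $\phi$ is sequentially normal, then $\phi$ is normal.
   Context: An ordered vector space $W$ is monotone complete if every non-empty upward directed subset of $W$ that is bounded above has a supremum in $W$ (in particular every bounded above increasing sequence then has a supremum). A positive linear functional $\psi$ on an ordered vector space $W$ with positive cone $W_+$ is faithful if $\psi(a)>0$ for every $a\in W_+\setminus\{0\}$. A positive linear map $\phi:A\to B$ between monotone complete ordered vector spaces is called normal if $\phi(\sup J)=\sup_{j\in J}\phi(j)$ for every non-empty upper bounded upward directed subset $J$ of $A$, and sequentially normal if $\phi(\sup_n j_n)=\sup_n\phi(j_n)$ for every upper bounded increasing sequence $(j_n)$ in $A$. *)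

From HB Require Import structures.
From mathcomp Require Import all_boot all_order all_algebra.
From mathcomp Require Import reals.
Set Implicit Arguments. Unset Strict Implicit. Unset Printing Implicit Defensive.
Import Order.TTheory GRing.Theory Num.Theory.
Local Open Scope ring_scope.

Section OrdVS.
Variables (R : realType) (V : lmodType R).

(* W_+ is a proper convex cone: this is exactly what makes
   x <= y := (y - x \in W_+) a partial order compatible with the
   vector space operations. *)
Definition is_pos_cone (P : V -> Prop) : Prop :=
  [/\ P 0,
      (forall x y, P x -> P y -> P (x + y)),
      (forall (r : R) x, 0 <= r -> P x -> P (r *: x)) &
      (forall x, P x -> P (- x) -> x = 0)].

Definition ovle (P : V -> Prop) (x y : V) : Prop := P (y - x).

Definition is_ub (P : V -> Prop) (J : V -> Prop) (u : V) : Prop :=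
  forall j, J j -> ovle P j u.

Definition bounded_above (P : V -> Prop) (J : V -> Prop) : Prop :=
  exists u, is_ub P J u.

Definition is_sup (P : V -> Prop) (J : V -> Prop) (s : V) : Prop :=
  is_ub P J s /\ forall u, is_ub P J u -> ovle P s u.

Definition up_directed (P : V -> Prop) (J : V -> Prop) : Prop :=
  (exists j, J j) /\
  forall a b, J a -> J b -> exists c, [/\ J c, ovle P a c & ovle P b c].

Definition monotone_complete (P : V -> Prop) : Prop :=
  forall J, up_directed P J -> bounded_above P J -> exists s, is_sup P J s.

Definition vector_lattice (P : V -> Prop) : Prop :=
  forall x y, exists s, is_sup P (fun z => z = x \/ z = y) s.

Definition faithful_pos_functional (P : V -> Prop) (psi : V -> R) : Prop :=
  [/\ (forall x y, psi (x + y) = psi x + psi y),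
      (forall (r : R) x, psi (r *: x) = r * psi x),
      (forall x, P x -> 0 <= psi x) &
      (forall x, P x -> x <> 0 -> 0 < psi x)].

End OrdVS.

Section Maps.
Variables (R : realType) (A B : lmodType R).

Definition positive_map (PA : A -> Prop) (PB : B -> Prop) (phi : A -> B) :=
  forall x, PA x -> PB (phi x).

Definition increasing_seq (PA : A -> Prop) (j : nat -> A) :=
  forall n, ovle PA (j n) (j n.+1).

Definition normal_map (PA : A -> Prop) (PB : B -> Prop) (phi : A -> B) :=
  forall (J : A -> Prop), up_directed PA J -> bounded_above PA J ->
    forall s, is_sup PA J s ->
      is_sup PB (fun b => exists2 a, J a & b = phi a) (phi s).

Definition seq_normal_map (PA : A -> Prop) (PB : B -> Prop) (phi : A -> B) :=
  forall (j : nat -> A), increasing_seq PA j ->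
    bounded_above PA (fun a => exists n, a = j n) ->
    forall s, is_sup PA (fun a => exists n, a = j n) s ->
      is_sup PB (fun b => exists n, b = phi (j n)) (phi s).

End Maps.

From HB Require Import structures.
From mathcomp Require Import all_boot all_order all_algebra.
From mathcomp Require Import boolp classical_sets reals lra.
Set Implicit Arguments. Unset Strict Implicit. Unset Printing Implicit Defensive.
Import Order.TTheory GRing.Theory Num.Theory.
Local Open Scope ring_scope.

(* Let J be directed with supremum s, and let alpha be the supremum of the
   faithful functional psi on J.  Choose elements of J on which psi comes
   within 1/(n+1) of alpha and use directedness to push them into an
   increasing sequence j_n in J; let t be its supremum.  For any a in J the
   positive part of a - t lies below c - j_n for some c in J above a and j_n,
   so psi of it is at most 1/(n+1) for every n; faithfulness forces it to
   vanish, i.e. a <= t.  Hence t = s, and sequential normality applied to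
   (j_n) gives phi s = sup phi(j_n) <= sup phi(J). *)

Section OrderedSpace.
Variables (R : realType) (V : lmodType R) (P : V -> Prop).
Hypothesis cone : is_pos_cone P.

Lemma ovle_refl x : ovle P x x.
Proof. by case: cone => P0 _ _ _; rewrite /ovle subrr. Qed.

Lemma ovle_trans y x z : ovle P x y -> ovle P y z -> ovle P x z.
Proof.
case: cone => _ PD _ _; rewrite /ovle => xy yz.
by move: (PD _ _ yz xy); rewrite addrA subrK.
Qed.

Lemma ovle_anti x y : ovle P x y -> ovle P y x -> x = y.
Proof.
case: cone => _ _ _ Panti; rewrite /ovle => xy yx.
by apply/eqP; rewrite eq_sym -subr_eq0 (Panti (y - x)) // opprB.
Qed.

Lemma ovleB x1 y1 x2 y2 :
  ovle P x1 y1 -> ovle P x2 y2 -> ovle P (x1 - y2) (y1 - x2).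
Proof.
case: cone => _ PD _ _; rewrite /ovle => le1 le2.
have -> : y1 - x2 - (x1 - y2) = (y1 - x1) + (y2 - x2).
  by rewrite opprB addrACA [RHS]addrACA [- x2 + _]addrC.
exact: PD.
Qed.

Lemma is_sup_unique J s t : is_sup P J s -> is_sup P J t -> s = t.
Proof.
move=> [sJ sleast] [tJ tleast].
by apply: ovle_anti; [apply: sleast tJ | apply: tleast sJ].
Qed.

Lemma is_sup_subset S J t : (forall x, S x -> J x) ->
  is_sup P S t -> is_ub P J t -> is_sup P J t.
Proof.
move=> SJ [_ tleast] tJ; split=> // u uJ.
by apply: tleast => x Sx; apply: uJ; apply: SJ.
Qed.

Lemma increasing_seq_ovle j m n : increasing_seq P j -> (m <= n)%N ->
  ovle P (j m) (j n).
Proof.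
move=> incr; elim: n => [|n IH].
  by rewrite leqn0 => /eqP ->; exact: ovle_refl.
rewrite leq_eqVlt => /orP [/eqP -> | ]; first exact: ovle_refl.
by rewrite ltnS => /IH le_mn; apply: ovle_trans le_mn (incr n).
Qed.

Lemma increasing_seq_up_directed j : increasing_seq P j ->
  up_directed P (fun x => exists n, x = j n).
Proof.
move=> incr; split; first by exists (j 0%N), 0%N.
move=> _ _ [m ->] [n ->]; exists (j (maxn m n)); split.
- by exists (maxn m n).
- by apply: increasing_seq_ovle; rewrite ?leq_maxl.
- by apply: increasing_seq_ovle; rewrite ?leq_maxr.
Qed.

Lemma up_directed_increasing_majorant J (a : nat -> V) :
  up_directed P J -> (forall n, J (a n)) ->
  exists j, [/\ increasing_seq P j, forall n, J (j n) &
                forall n, ovle P (a n) (j n)].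
Proof.
move=> [_ dirJ] Ja.
have /choice [ub ubP] : forall xy : {x | J x} * {x | J x}, exists c : {x | J x},
    ovle P (sval xy.1) (sval c) /\ ovle P (sval xy.2) (sval c).
  move=> [[x Jx] [y Jy]]; have [c [Jc xc yc]] := dirJ _ _ Jx Jy.
  by exists (exist J c Jc).
pose fix js n : {x | J x} :=
  if n is n'.+1 then ub (js n', exist J _ (Ja n)) else exist J _ (Ja 0%N).
exists (fun n => sval (js n)); split.
- by move=> n; case: (ubP (js n, exist J _ (Ja n.+1))).
- by move=> n; exact: svalP.
- by case=> [|n]; [exact: ovle_refl | case: (ubP (js n, exist J _ (Ja n.+1)))].
Qed.

End OrderedSpace.

Section FaithfulFunctional.
Variables (R : realType) (V : lmodType R) (P : V -> Prop) (psi : V -> R).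
Hypothesis fpsi : faithful_pos_functional P psi.

Lemma psiB x y : psi (x - y) = psi x - psi y.
Proof. by case: fpsi => psiD psiZ _ _; rewrite psiD -scaleN1r psiZ mulN1r. Qed.

Lemma psi_le x y : ovle P x y -> psi x <= psi y.
Proof.
by case: fpsi => _ _ psi_ge0 _ xy; rewrite -subr_ge0 -psiB; apply: psi_ge0.
Qed.

Lemma ovle0_of_small_majorants x : vector_lattice P ->
  (forall e, 0 < e -> exists y, [/\ ovle P x y, P y & psi y <= e]) ->
  ovle P x 0.
Proof.
move=> vlat small; have [d [dub dleast]] := vlat x 0.
have xd : ovle P x d by apply: dub; left.
have Pd : P d by move: (dub 0 (or_intror erefl)); rewrite /ovle subr0.
suff d0 : d = 0 by rewrite -d0.
have psid_le0 : psi d <= 0.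
  apply/ler_addgt0Pr => e /small [y [xy Py psiy]]; rewrite add0r.
  apply: le_trans psiy; apply: psi_le; apply: dleast => _ [->|->] //.
  by rewrite /ovle subr0.
have [//|d_neq0] := pselect (d = 0).
case: fpsi => _ _ _ psi_gt0.
by have := psi_gt0 d Pd d_neq0; rewrite ltNge psid_le0.
Qed.

End FaithfulFunctional.

Lemma exists_inv_succn_lt (R : archiRealFieldType) (e : R) :
  0 < e -> exists n : nat, (n.+1%:R)^-1 < e.
Proof.
move=> e_gt0; exists (Num.bound e^-1).
rewrite invf_plt ?posrE ?ltr0n //.
by apply: lt_trans (archi_boundP _) _; rewrite ?invr_ge0 ?ltW // ltr_nat.
Qed.

Section SequentialCofinality.
Variables (R : realType) (V : lmodType R) (P : V -> Prop) (psi : V -> R).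
Hypotheses (cone : is_pos_cone P) (fpsi : faithful_pos_functional P psi).
Hypothesis vlat : vector_lattice P.

Lemma is_ub_of_psi_exhausting J (j : nat -> V) t (alpha : R) :
  up_directed P J -> (forall n, J (j n)) ->
  is_ub P (fun x => exists n, x = j n) t ->
  (forall a, J a -> psi a <= alpha) ->
  (forall n, alpha - (n.+1%:R)^-1 < psi (j n)) ->
  is_ub P J t.
Proof.
move=> [_ dirJ] Jj tub alpha_ub psi_j a Ja.
suff : ovle P (a - t) 0 by rewrite /ovle sub0r opprB.
apply: (ovle0_of_small_majorants fpsi vlat) => e e_gt0.
have [n lt_inv_e] := exists_inv_succn_lt e_gt0.
have [c [Jc ac jc]] := dirJ _ _ Ja (Jj n).
exists (c - j n); split => //.
- by apply: ovleB => //; apply: tub; exists n.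
- have := alpha_ub c Jc; have := psi_j n; move: lt_inv_e.
  by rewrite (psiB fpsi); move: (n.+1%:R)^-1 => i; lra.
Qed.

Lemma up_directed_sup_increasing_seq J s :
  monotone_complete P -> up_directed P J -> is_sup P J s ->
  exists j, [/\ increasing_seq P j, forall n, J (j n) &
                is_sup P (fun x => exists n, x = j n) s].
Proof.
move=> mcomp dirJ supJ; have [sJ _] := supJ; have [[a0 Ja0] _] := dirJ.
pose alpha := sup [set psi a | a in J].
have psiJ_sup : has_sup [set psi a | a in J].
  split; first by exists (psi a0), a0.
  by exists (psi s) => _ [a Ja <-]; apply: (psi_le fpsi); apply: sJ.
have /choice [a aP] : forall n : nat,
    exists a, J a /\ alpha - (n.+1%:R)^-1 < psi a.
  move=> n; have inv_gt0 : 0 < (n.+1%:R : R)^-1 by rewrite invr_gt0 ltr0n.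
  by have [_ [a Ja <-] lt_a] := sup_adherent inv_gt0 psiJ_sup; exists a.
have [j [incr Jj aj]] :=
  up_directed_increasing_majorant cone dirJ (fun n => (aP n).1).
have jJ x : (exists n, x = j n) -> J x by case=> n ->.
have [t tsup] := mcomp _ (increasing_seq_up_directed cone incr)
                         (ex_intro _ s (fun x jx => sJ x (jJ x jx))).
have t_supJ : is_sup P J t.
  apply: (is_sup_subset jJ tsup).
  apply: (is_ub_of_psi_exhausting (alpha := alpha) dirJ Jj tsup.1).
  - by move=> a' Ja'; apply: sup_upper_bound psiJ_sup _ _; exists a'.
  - by move=> n; apply: lt_le_trans (aP n).2 (psi_le fpsi (aj n)).
by exists j; split => //; rewrite (is_sup_unique cone supJ t_supJ).
Qed.

End SequentialCofinality.

Theorem mainTheorem2 (R : realType) (A B : lmodType R)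
    (PA : A -> Prop) (PB : B -> Prop) (phi : {linear A -> B}) :
  is_pos_cone PA -> is_pos_cone PB ->
  monotone_complete PA -> monotone_complete PB ->
  vector_lattice PA ->
  (exists psi : A -> R, faithful_pos_functional PA psi) ->
  positive_map PA PB phi ->
  seq_normal_map PA PB phi ->
  normal_map PA PB phi.
Proof.
move=> coneA _ mcA _ vlat [psi fpsi] posphi seqn J dirJ _ s supJ.
have [j [incr Jj supj]] :=
  up_directed_sup_increasing_seq coneA fpsi vlat mcA dirJ supJ.
apply: (is_sup_subset (S := fun b => exists n, b = phi (j n))).
- by move=> _ [n ->]; exists (j n).
- exact: seqn j incr (ex_intro _ s supj.1) s supj.
- by move=> _ [a Ja ->]; rewrite /ovle -linearB; apply: posphi; apply: supJ.1.
Qed.
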